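(* Let $M_m$ satisfy $G_m\ge0$. If $u,v\in M_m$ satisfy $0<r_u<r_v$ and $\gamma_u$ has finite turn angle, then $T_{\gamma_u}\le T_{\gamma_v}$, with equality if and only if $G_m$ vanishes on $[r_u,\infty)$.
   Context: For a smooth function $m\colon[0,\infty)\to[0,\infty)$ with $m(0)=0$, $m'(0)=1$, $m>0$ on $(0,\infty)$ and smooth odd extension, $M_m$ is $\mathbb R^2$ with metric $dr^2+m(r)^2d\theta^2$ (polar coordinates $(r,\theta)$ about origin $o$), curvature $G_m=-m''/m$. For $q\ne o$, $r_q$ is its $r$-coordinate and $\gamma_q\colon[0,\infty)\to M_m$ is the unit speed geodesic starting at $q$ in direction $\partial_\theta$. For a geodesic $\gamma$ on $[0,\infty)$ not passing through $o$, its turn angle is $T_\gamma=\int_0^\infty|\dot\theta_{\gamma(s)}|\,ds\in[0,\infty]$. *)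

From Stdlib Require Import Reals.
From Coquelicot Require Import Coquelicot.
Open Scope R_scope.

(* Admissible profile m: smooth odd function on R (the smooth odd extension
   of m : [0,oo) -> [0,oo)), with m(0)=0, m'(0)=1, m>0 on (0,oo). *)
Definition is_profile (m : R -> R) : Prop :=
  (forall (n : nat) (x : R), ex_derive_n m n x) /\
  (forall x, m (- x) = - m x) /\
  m 0 = 0 /\
  Derive m 0 = 1 /\
  (forall r, 0 < r -> 0 < m r).

Definition Gm (m : R -> R) (r : R) : R := - Derive (Derive m) r / m r.

(* (rr, th) are the polar coordinates (r, theta) of a geodesic of
   M_m = (R^2, dr^2 + m(r)^2 dtheta^2) avoiding the origin o:
   the geodesic equations with Christoffel symbols
   Gamma^r_{theta theta} = - m m',  Gamma^theta_{r theta} = m'/m. *)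
Definition polar_geodesic (m : R -> R) (rr th : R -> R) : Prop :=
  forall s : R,
    0 < rr s /\
    ex_derive rr s /\ ex_derive th s /\
    ex_derive (Derive rr) s /\ ex_derive (Derive th) s /\
    Derive (Derive rr) s = m (rr s) * Derive m (rr s) * (Derive th s) ^ 2 /\
    Derive (Derive th) s
      = - (2 * Derive m (rr s) / m (rr s)) * Derive rr s * Derive th s.

(* gamma_q for q with polar coordinates (rq, thq), rq > 0: the unit speed
   geodesic starting at q in direction d/dtheta, i.e. with initial velocity
   (1/m(rq)) d/dtheta. *)
Definition gamma_of (m : R -> R) (rq thq : R) (rr th : R -> R) : Prop :=
  polar_geodesic m rr th /\
  rr 0 = rq /\ th 0 = thq /\
  Derive rr 0 = 0 /\ Derive th 0 = / m rq.

(* Turn angle T = int_0^oo |theta'(s)| ds in [0, +oo], as the supremum of the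
   partial integrals of the nonnegative integrand. *)
Definition turn_angle (th : R -> R) : Rbar :=
  Lub_Rbar (fun y => exists t, 0 <= t /\
              y = RInt (fun s => Rabs (Derive th s)) 0 t).

(* Along a geodesic from radius r0, Clairaut's relation m(r)^2 theta' = m(r0) and unit speed
   give, in the variable x = m(r)/m(r0), the density
     d theta / d x = 1 / (m'(m^-1(m(r0) x)) * x * sqrt(x^2 - 1)),
   so the turn angle is the integral of this density over (1, +oo). A finite turn angle forces
   m to be unbounded; since G >= 0 means m'' <= 0, this makes m' > 0 and m invertible. As m' is
   nonincreasing, the density only grows when r0 increases, and it grows strictly at some x
   unless m'' (equivalently G) vanishes on [r_u, +oo). *)

From Stdlib Require Import Reals Ranalysis5 Lra Psatz ClassicalEpsilon.
From Coquelicot Require Import Coquelicot.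
Open Scope R_scope.

Ltac eta_reduce :=
  repeat match goal with |- context [fun x : R => ?f x] => change (fun x : R => f x) with f end.

Lemma MVT_Derive (f : R -> R) a b : (forall x, ex_derive f x) -> a < b ->
  exists c, a < c < b /\ f b - f a = Derive f c * (b - a).
Proof.
  intros Hf Hab.
  destruct (MVT_cor2 f (Derive f) a b Hab) as [c [Ec Hc]].
  - intros c _. apply is_derive_Reals, Derive_correct, Hf.
  - exists c. split; assumption.
Qed.

Lemma Derive_nonneg_le (f : R -> R) a b : (forall x, ex_derive f x) -> a <= b ->
  (forall x, a < x < b -> 0 <= Derive f x) -> f a <= f b.
Proof.
  intros Hf Hab Hpos. destruct (Req_dec a b) as [<-|Hne]; [lra|].
  destruct (MVT_Derive f a b Hf) as [c [Hc E]]; [lra|].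
  specialize (Hpos c Hc). nra.
Qed.

Lemma Derive_pos_lt (f : R -> R) a b : (forall x, ex_derive f x) -> a < b ->
  (forall x, a < x < b -> 0 < Derive f x) -> f a < f b.
Proof.
  intros Hf Hab Hpos.
  destruct (MVT_Derive f a b Hf Hab) as [c [Hc E]].
  specialize (Hpos c Hc). nra.
Qed.

Lemma is_derive_0_const (f : R -> R) a b : (forall x, is_derive f x 0) -> f a = f b.
Proof.
  intros Hf.
  assert (Hex : forall x, ex_derive f x) by (intro x; exists 0; apply Hf).
  assert (HD : forall x, Derive f x = 0) by (intro x; apply is_derive_unique, Hf).
  destruct (Rtotal_order a b) as [Hab|[<-|Hba]]; [| reflexivity |].
  - destruct (MVT_Derive f a b Hex Hab) as [c [_ E]]. rewrite HD in E. lra.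
  - destruct (MVT_Derive f b a Hex Hba) as [c [_ E]]. rewrite HD in E. lra.
Qed.

Lemma ex_derive_continuity_pt (f : R -> R) x : ex_derive f x -> continuity_pt f x.
Proof.
  intros H. apply continuity_pt_filterlim.
  exact (@ex_derive_continuous R_AbsRing R_NormedModule f x H).
Qed.

Lemma continuity_pt_pos_near (f : R -> R) x0 : continuity_pt f x0 -> 0 < f x0 ->
  exists del, 0 < del /\ forall x, Rabs (x - x0) < del -> f x0 / 2 < f x.
Proof.
  intros Hf Hpos.
  destruct (Hf (f x0 / 2) ltac:(lra)) as [del [Hdel Hnear]].
  exists del. split; [exact Hdel|]. intros x Hx.
  destruct (Req_dec x x0) as [->|Hne]; [lra|].
  assert (Hfx : Rabs (f x - f x0) < f x0 / 2) by (apply Hnear; repeat split; auto).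
  apply Rabs_def2 in Hfx. lra.
Qed.

Lemma Rbar_le_right_limit (f : R -> R) (a s0 : R) (T : Rbar) :
  continuity_pt f a -> a < s0 ->
  (forall s, a < s <= s0 -> Rbar_le (f s) T) -> Rbar_le (f a) T.
Proof.
  intros Hf Has0 Hle. destruct T as [V| |]; simpl in *; [| exact I | exact (Hle s0 ltac:(lra))].
  apply Rnot_lt_le. intros HV.
  assert (Hg : continuity_pt (fun s => f s - V) a)
    by (apply continuity_pt_minus; [exact Hf | apply continuity_pt_const; intros ? ?; reflexivity]).
  destruct (continuity_pt_pos_near _ a Hg ltac:(lra)) as [del [Hdel Hnear]].
  set (s := Rmin (a + del / 2) s0).
  assert (Hs : a < s <= s0) by (split; [apply Rmin_glb_lt|apply Rmin_r]; lra).
  assert (Hs' : s <= a + del / 2) by apply Rmin_l.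
  specialize (Hnear s ltac:(apply Rabs_def1; lra)). specialize (Hle s Hs). lra.
Qed.

Lemma Lub_Rbar_approx (E : R -> Prop) eps : is_finite (Lub_Rbar E) -> 0 < eps ->
  exists y, E y /\ real (Lub_Rbar E) - eps < y.
Proof.
  intros Hfin Heps. apply NNPP. intros Hno.
  assert (Hub : Rbar_le (Lub_Rbar E) (real (Lub_Rbar E) - eps)).
  { apply Lub_Rbar_correct. intros y Hy. simpl.
    apply Rnot_lt_le. intros Hlt. apply Hno. exists y. split; assumption. }
  unfold is_finite in Hfin.
  destruct (Lub_Rbar E); simpl in *; try discriminate. lra.
Qed.

Lemma RInt_le_widen (f : R -> R) a' a b b' : a' <= a -> a <= b -> b <= b' ->
  ex_RInt f a' b' -> (forall x, a' < x < b' -> 0 <= f x) -> RInt f a b <= RInt f a' b'.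
Proof.
  intros Ha Hab Hb Hf Hpos.
  assert (Ha'b : ex_RInt f a' b) by (apply (ex_RInt_Chasles_1 f a' b b'); auto; lra).
  assert (Hbb' : ex_RInt f b b') by (apply (ex_RInt_Chasles_2 f a' b b'); auto; lra).
  assert (Ha'a : ex_RInt f a' a) by (apply (ex_RInt_Chasles_1 f a' a b); auto; lra).
  assert (Hab' : ex_RInt f a b) by (apply (ex_RInt_Chasles_2 f a' a b); auto; lra).
  rewrite <- (RInt_Chasles f a' b b' Ha'b Hbb'), <- (RInt_Chasles f a' a b Ha'a Hab').
  assert (0 <= RInt f a' a) by (apply RInt_ge_0; auto; intros; apply Hpos; lra).
  assert (0 <= RInt f b b') by (apply RInt_ge_0; auto; intros; apply Hpos; lra).
  simpl. unfold plus. simpl. lra.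
Qed.

(* For nonnegative [f] this is the improper integral of [f] over (1, +oo). *)
Definition RInt_1_infty (f : R -> R) : Rbar :=
  Lub_Rbar (fun y => exists a b, 1 < a <= b /\ y = RInt f a b).

Lemma ex_RInt_gt1 (h : R -> R) a b : (forall x, 1 < x -> continuous h x) -> 1 < a <= b ->
  ex_RInt h a b.
Proof.
  intros Hh Hab. apply (@ex_RInt_continuous R_CompleteNormedModule). intros z Hz. apply Hh.
  rewrite Rmin_left in Hz; lra.
Qed.

Lemma RInt_le_RInt_1_infty (h : R -> R) a b : 1 < a <= b ->
  Rbar_le (RInt h a b) (RInt_1_infty h).
Proof. intros Hab. apply Lub_Rbar_correct. exists a, b. auto. Qed.

Section RInt_1_infty_comparison.
Variables f g : R -> R.
Hypothesis f_cont : forall x, 1 < x -> continuous f x.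
Hypothesis g_cont : forall x, 1 < x -> continuous g x.
Hypothesis f_le_g : forall x, 1 < x -> f x <= g x.

Lemma RInt_1_infty_le : Rbar_le (RInt_1_infty f) (RInt_1_infty g).
Proof.
  apply Lub_Rbar_correct. intros y [a [b [Hab ->]]].
  apply Rbar_le_trans with (RInt g a b); [| apply RInt_le_RInt_1_infty; exact Hab].
  simpl. apply RInt_le; [lra | apply ex_RInt_gt1; auto .. |].
  intros x Hx. apply f_le_g. lra.
Qed.

Lemma RInt_gap x0 : 1 < x0 -> f x0 < g x0 ->
  exists d del, 0 < d /\ 0 < del /\
    forall a b, 1 < a <= x0 -> x0 + del <= b -> RInt f a b + d <= RInt g a b.
Proof.
  intros Hx0 Hlt. set (h := fun x => g x - f x).
  assert (h_cont : forall x, 1 < x -> continuous h x)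
    by (intros x Hx; apply (continuous_minus g f); auto).
  destruct (continuity_pt_pos_near h x0) as [del [Hdel Hnear]].
  { apply continuity_pt_filterlim, h_cont, Hx0. }
  { unfold h. lra. }
  exists (h x0 / 2 * (del / 2)), (del / 2). split; [unfold h; nra|]. split; [lra|].
  intros a b Ha Hb.
  assert (E : RInt h a b = RInt g a b - RInt f a b).
  { apply (RInt_minus g f); apply ex_RInt_gt1; auto; lra. }
  assert (Hwide : RInt h x0 (x0 + del / 2) <= RInt h a b).
  { apply RInt_le_widen; try lra.
    - apply ex_RInt_gt1; auto; lra.
    - intros x Hx. unfold h. pose proof (f_le_g x ltac:(lra)). lra. }
  assert (Hmid : RInt (fun _ => h x0 / 2) x0 (x0 + del / 2) <= RInt h x0 (x0 + del / 2)).
  { apply RInt_le; [lra | apply ex_RInt_const | apply ex_RInt_gt1; auto; lra |].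
    intros x Hx. left. apply Hnear. apply Rabs_def1; lra. }
  rewrite RInt_const in Hmid. simpl in Hmid. unfold scal in Hmid. simpl in Hmid.
  unfold mult in Hmid. simpl in Hmid. nra.
Qed.

Lemma RInt_1_infty_lt x0 : (forall x, 1 < x -> 0 <= f x) -> 1 < x0 -> f x0 < g x0 ->
  is_finite (RInt_1_infty f) -> Rbar_lt (RInt_1_infty f) (RInt_1_infty g).
Proof.
  intros f_nonneg Hx0 Hlt Hfin.
  destruct (RInt_gap x0 Hx0 Hlt) as [d [del [Hd [Hdel Hgap]]]].
  destruct (Lub_Rbar_approx _ (d / 2) Hfin ltac:(lra)) as [y [[a [b [Hab ->]]] Hy]].
  set (a' := Rmin a x0). set (b' := Rmax b (x0 + del)).
  assert (Ha' : 1 < a' <= a) by (split; [apply Rmin_glb_lt | apply Rmin_l]; lra).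
  assert (Hb' : b <= b' /\ x0 + del <= b') by (split; [apply Rmax_l | apply Rmax_r]).
  assert (Hwide : RInt f a b <= RInt f a' b').
  { apply RInt_le_widen; try lra.
    - apply ex_RInt_gt1; auto; lra.
    - intros x Hx. apply f_nonneg. lra. }
  pose proof (Hgap a' b' ltac:(split; [lra | apply Rmin_r]) ltac:(lra)).
  pose proof (RInt_le_RInt_1_infty g a' b' ltac:(lra)) as Hg.
  fold (RInt_1_infty f) in Hy. unfold is_finite in Hfin.
  destruct (RInt_1_infty f); destruct (RInt_1_infty g); simpl in *; try discriminate; auto. lra.
Qed.

End RInt_1_infty_comparison.

Definition unbounded_nonneg (f : R -> R) : Prop := forall B, exists r, 0 <= r /\ B < f r.

Section Profile.
Variable m : R -> R.
Hypothesis m_profile : is_profile m.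
Hypothesis curvature_nonneg : forall r, 0 < r -> 0 <= Gm m r.

Lemma ex_derive_m x : ex_derive m x.
Proof. exact (proj1 m_profile 1%nat x). Qed.
Lemma ex_derive_Derive_m x : ex_derive (Derive m) x.
Proof. exact (proj1 m_profile 2%nat x). Qed.
Lemma ex_derive_Derive2_m x : ex_derive (Derive (Derive m)) x.
Proof. exact (proj1 m_profile 3%nat x). Qed.
Lemma m_0 : m 0 = 0.
Proof. apply m_profile. Qed.
Lemma Derive_m_0 : Derive m 0 = 1.
Proof. apply m_profile. Qed.
Lemma m_pos r : 0 < r -> 0 < m r.
Proof. apply m_profile. Qed.

Lemma Gm_eq_0 r : 0 < r -> Gm m r = 0 <-> Derive (Derive m) r = 0.
Proof.
  intros Hr. pose proof (m_pos r Hr). unfold Gm. split; intros H0.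
  - apply (Rmult_eq_reg_r (- / m r)); [|apply Ropp_neq_0_compat, Rinv_neq_0_compat; lra].
    rewrite Rmult_0_l, <- H0. field. lra.
  - rewrite H0. field. lra.
Qed.

Lemma Derive2_m_nonpos r : 0 < r -> Derive (Derive m) r <= 0.
Proof.
  intros Hr. pose proof (curvature_nonneg r Hr) as HG. pose proof (m_pos r Hr).
  unfold Gm in HG. replace (Derive (Derive m) r) with (- (- Derive (Derive m) r / m r) * m r)
    by (field; lra).
  nra.
Qed.

Lemma Derive_m_noninc a b : 0 <= a -> a <= b -> Derive m b <= Derive m a.
Proof.
  intros Ha Hab. destruct (Req_dec a b) as [<-|Hne]; [lra|].
  destruct (MVT_Derive (Derive m) a b ex_derive_Derive_m) as [c [Hc E]]; [lra|].
  pose proof (Derive2_m_nonpos c ltac:(lra)). nra.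
Qed.

Lemma m_le_id r : 0 <= r -> m r <= r.
Proof.
  intros Hr. destruct (Req_dec r 0) as [->|Hne]; [rewrite m_0; lra|].
  destruct (MVT_Derive m 0 r ex_derive_m) as [c [Hc E]]; [lra|].
  pose proof (Derive_m_noninc 0 c ltac:(lra) ltac:(lra)). rewrite m_0, Derive_m_0 in *. nra.
Qed.

Section Geodesic.
Context {r0 th0 : R} {rr th : R -> R}.
Hypothesis geodesic : gamma_of m r0 th0 rr th.

Lemma rr_pos s : 0 < rr s.
Proof. apply geodesic. Qed.
Lemma ex_derive_rr s : ex_derive rr s.
Proof. apply geodesic. Qed.
Lemma ex_derive_th s : ex_derive th s.
Proof. apply geodesic. Qed.
Lemma ex_derive_Derive_rr s : ex_derive (Derive rr) s.
Proof. apply geodesic. Qed.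
Lemma ex_derive_Derive_th s : ex_derive (Derive th) s.
Proof. apply geodesic. Qed.
Lemma Derive2_rr s : Derive (Derive rr) s = m (rr s) * Derive m (rr s) * Derive th s ^ 2.
Proof. apply geodesic. Qed.
Lemma Derive2_th s :
  Derive (Derive th) s = - (2 * Derive m (rr s) / m (rr s)) * Derive rr s * Derive th s.
Proof. apply geodesic. Qed.
Lemma rr_0 : rr 0 = r0.
Proof. apply geodesic. Qed.
Lemma Derive_rr_0 : Derive rr 0 = 0.
Proof. apply geodesic. Qed.
Lemma Derive_th_0 : Derive th 0 = / m r0.
Proof. apply geodesic. Qed.

Lemma r0_pos : 0 < r0.
Proof. rewrite <- rr_0. apply rr_pos. Qed.

Lemma m_rr_pos s : 0 < m (rr s).
Proof. apply m_pos, rr_pos. Qed.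

Lemma clairaut s : m (rr s) ^ 2 * Derive th s = m r0.
Proof.
  rewrite (is_derive_0_const (fun s => m (rr s) ^ 2 * Derive th s) s 0).
  - rewrite rr_0, Derive_th_0. pose proof (m_pos r0 r0_pos). field. lra.
  - intro x. auto_derive.
    + auto using ex_derive_m, ex_derive_rr, ex_derive_Derive_th.
    + eta_reduce. rewrite Derive2_th. pose proof (m_rr_pos x). field. lra.
Qed.

Lemma unit_speed s : Derive rr s ^ 2 + m (rr s) ^ 2 * Derive th s ^ 2 = 1.
Proof.
  rewrite (is_derive_0_const
             (fun s => Derive rr s ^ 2 + m (rr s) ^ 2 * Derive th s ^ 2) s 0).
  - rewrite Derive_rr_0, rr_0, Derive_th_0. pose proof (m_pos r0 r0_pos). field. lra.
  - intro x. auto_derive.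
    + auto using ex_derive_m, ex_derive_rr, ex_derive_Derive_rr, ex_derive_Derive_th.
    + eta_reduce. rewrite Derive2_th, Derive2_rr. pose proof (m_rr_pos x). field. lra.
Qed.

Lemma Derive_th_eq s : Derive th s = m r0 / m (rr s) ^ 2.
Proof. rewrite <- (clairaut s). pose proof (m_rr_pos s). field. lra. Qed.

Lemma Derive_th_pos s : 0 < Derive th s.
Proof.
  rewrite Derive_th_eq. pose proof (m_rr_pos s). pose proof (m_pos r0 r0_pos).
  apply Rdiv_lt_0_compat; [lra | apply pow_lt; lra].
Qed.

Lemma th_le a b : a <= b -> th a <= th b.
Proof.
  intros Hab. apply Derive_nonneg_le; auto using ex_derive_th.
  intros x _. left. apply Derive_th_pos.
Qed.

Lemma RInt_abs_Derive_th t : RInt (fun s => Rabs (Derive th s)) 0 t = th t - th 0.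
Proof.
  rewrite (RInt_ext _ (Derive th)).
  - apply RInt_Derive; intros x _; [apply ex_derive_th |].
    exact (@ex_derive_continuous R_AbsRing R_NormedModule _ _ (ex_derive_Derive_th x)).
  - intros x _. apply Rabs_pos_eq. left. apply Derive_th_pos.
Qed.

Lemma turn_angle_ge t : 0 <= t -> Rbar_le (th t - th 0) (turn_angle th).
Proof.
  intros Ht. apply Lub_Rbar_correct. exists t. rewrite RInt_abs_Derive_th. auto.
Qed.

Lemma turn_angle_le (B : Rbar) :
  (forall t, 0 <= t -> Rbar_le (th t - th 0) B) -> Rbar_le (turn_angle th) B.
Proof.
  intros H. apply Lub_Rbar_correct. intros y [t [Ht ->]].
  rewrite RInt_abs_Derive_th. auto.
Qed.

Lemma m_unbounded_of_finite_turn_angle :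
  is_finite (turn_angle th) -> unbounded_nonneg m.
Proof.
  intros Hfin B. apply NNPP. intros Hno.
  (* If m <= M, then theta' >= m(r0) / M^2 and theta grows linearly. *)
  set (M := Rmax B 1).
  assert (Hle : forall s, m (rr s) <= M).
  { intros s. apply Rnot_lt_le. intros HM. apply Hno. exists (rr s).
    split; [left; apply rr_pos|]. pose proof (Rmax_l B 1) as HB. fold M in HB. lra. }
  assert (HM : 1 <= M) by apply Rmax_r.
  set (k := m r0 / M ^ 2).
  assert (Hk : 0 < k) by (apply Rdiv_lt_0_compat; [apply m_pos, r0_pos | apply pow_lt; lra]).
  assert (Hslope : forall t, 0 <= t -> k * t <= th t - th 0).
  { intros t Ht.
    enough (th 0 - k * 0 <= th t - k * t) by lra.
    apply (Derive_nonneg_le (fun s => th s - k * s)); [| exact Ht |].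
    - intro x. auto_derive. apply ex_derive_th.
    - intros x _. rewrite Derive_minus, Derive_scal, Derive_id;
        [| apply ex_derive_th | auto_derive; auto].
      rewrite Derive_th_eq. unfold k. pose proof (m_pos r0 r0_pos).
      pose proof (m_rr_pos x). pose proof (Hle x).
      enough (m r0 / M ^ 2 <= m r0 / m (rr x) ^ 2) by lra.
      apply Rmult_le_compat_l; [lra|].
      apply Rinv_le_contravar; [apply pow_lt; lra | apply pow_incr; lra]. }
  set (U := real (turn_angle th)).
  set (t := (Rabs U + 1) / k).
  assert (Ht : 0 <= t) by (apply Rdiv_le_0_compat; [pose proof (Rabs_pos U) |]; lra).
  pose proof (Hslope t Ht) as Hth. replace (k * t) with (Rabs U + 1) in Hth by (unfold t; field; lra).
  pose proof (turn_angle_ge t Ht) as HT. unfold is_finite in Hfin.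
  rewrite <- Hfin in HT. simpl in HT. fold U in HT. pose proof (Rle_abs U). lra.
Qed.

End Geodesic.

Section Unbounded.
Hypothesis m_unbounded : unbounded_nonneg m.

Lemma Derive_m_pos r : 0 <= r -> 0 < Derive m r.
Proof.
  intros Hr. apply Rnot_le_lt. intros Hle.
  destruct (m_unbounded r) as [y [Hy Hmy]].
  destruct (Rle_lt_dec y r) as [Hyr|Hry].
  - pose proof (m_le_id y Hy). lra.
  - destruct (MVT_Derive m r y ex_derive_m Hry) as [c [Hc E]].
    pose proof (Derive_m_noninc r c Hr ltac:(lra)). pose proof (m_le_id r Hr). nra.
Qed.

Lemma m_lt a b : 0 <= a -> a < b -> m a < m b.
Proof.
  intros Ha Hab. apply Derive_pos_lt; auto using ex_derive_m.
  intros x Hx. apply Derive_m_pos. lra.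
Qed.

Lemma m_le a b : 0 <= a -> a <= b -> m a <= m b.
Proof.
  intros Ha Hab. destruct (Req_dec a b) as [<-|Hne]; [lra|]. left. apply m_lt; lra.
Qed.

Lemma m_nonneg r : 0 <= r -> 0 <= m r.
Proof. intros Hr. rewrite <- m_0. apply m_le; lra. Qed.

(* [epsilon] makes [m_inv y] junk for y < 0. *)
Definition m_inv (y : R) : R := epsilon (inhabits 0) (fun r => 0 <= r /\ m r = y).

Lemma m_inv_spec y : 0 <= y -> 0 <= m_inv y /\ m (m_inv y) = y.
Proof.
  intros Hy. unfold m_inv. apply epsilon_spec.
  destruct (m_unbounded y) as [r [Hr Hmr]].
  destruct (IVT_cor (fun r => m r - y) 0 r) as [z [Hz Ez]]; [| exact Hr | |].
  - intro x. apply continuity_pt_minus;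
      [apply ex_derive_continuity_pt, ex_derive_m | apply continuity_pt_const; intros ? ?; reflexivity].
  - rewrite m_0. nra.
  - exists z. split; lra.
Qed.

Lemma m_inv_m r : 0 <= r -> m_inv (m r) = r.
Proof.
  intros Hr. destruct (m_inv_spec (m r) (m_nonneg r Hr)) as [Hinv Hm].
  destruct (Rtotal_order (m_inv (m r)) r) as [Hlt|[Heq|Hgt]]; [| exact Heq |].
  - pose proof (m_lt _ _ Hinv Hlt). lra.
  - pose proof (m_lt _ _ Hr Hgt). lra.
Qed.

Lemma m_inv_lt y1 y2 : 0 <= y1 -> y1 < y2 -> m_inv y1 < m_inv y2.
Proof.
  intros Hy1 Hy12. destruct (m_inv_spec y1 Hy1) as [H1 E1].
  destruct (m_inv_spec y2 ltac:(lra)) as [H2 E2].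
  apply Rnot_le_lt. intros Hle. pose proof (m_le _ _ H2 Hle). lra.
Qed.

Lemma m_inv_le y1 y2 : 0 <= y1 -> y1 <= y2 -> m_inv y1 <= m_inv y2.
Proof.
  intros Hy1 Hy12. destruct (Req_dec y1 y2) as [<-|Hne]; [lra|]. left. apply m_inv_lt; lra.
Qed.

Lemma m_inv_continuity_pt y : 0 < y -> continuity_pt m_inv y.
Proof.
  intros Hy. destruct (m_inv_spec y ltac:(lra)) as [Hr Hmr].
  apply (continuity_pt_recip_prelim m m_inv 0 (m_inv y + 1)); [lra | | | |].
  - intros a b Ha Hab _. apply m_lt; assumption.
  - intros r [Hr0 _]. apply m_inv_m, Hr0.
  - intros a _. apply ex_derive_continuity_pt, ex_derive_m.
  - rewrite m_0. split; [exact Hy|]. rewrite <- Hmr at 1. apply m_lt; lra.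
Qed.

Definition turn_density (c x : R) : R :=
  / (Derive m (m_inv (c * x)) * x * sqrt (x ^ 2 - 1)).

Lemma turn_density_pos c x : 0 < c -> 1 < x -> 0 < turn_density c x.
Proof.
  intros Hc Hx. apply Rinv_0_lt_compat. repeat apply Rmult_lt_0_compat; [| lra |].
  - apply Derive_m_pos, m_inv_spec. nra.
  - apply sqrt_lt_R0. nra.
Qed.

Lemma turn_density_continuous c x : 0 < c -> 1 < x -> continuous (turn_density c) x.
Proof.
  intros Hc Hx. apply continuity_pt_filterlim.
  assert (Hslope : continuity_pt (fun x => Derive m (m_inv (c * x))) x).
  { apply (continuity_pt_comp (fun x => m_inv (c * x)) (Derive m)).
    - apply (continuity_pt_comp (fun x => c * x) m_inv).
      + apply ex_derive_continuity_pt. auto_derive. exact I.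
      + apply m_inv_continuity_pt. nra.
    - apply ex_derive_continuity_pt, ex_derive_Derive_m. }
  assert (Hroot : continuity_pt (fun x => x * sqrt (x ^ 2 - 1)) x).
  { apply ex_derive_continuity_pt. auto_derive. nra. }
  apply (continuity_pt_inv (fun x => Derive m (m_inv (c * x)) * x * sqrt (x ^ 2 - 1))).
  - eapply continuity_pt_ext; [intro y; symmetry; apply Rmult_assoc|].
    exact (continuity_pt_mult _ _ x Hslope Hroot).
  - pose proof (turn_density_pos c x Hc Hx) as Hpos. unfold turn_density in Hpos.
    cbv beta. intros H0. rewrite H0, Rinv_0 in Hpos. lra.
Qed.

Lemma turn_density_le c c' x : 0 < c -> c <= c' -> 1 < x ->
  turn_density c x <= turn_density c' x.
Proof.
  intros Hc Hcc' Hx. unfold turn_density.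
  assert (Hinv : m_inv (c * x) <= m_inv (c' * x)) by (apply m_inv_le; nra).
  assert (Hpos : 0 <= m_inv (c * x)) by (apply m_inv_spec; nra).
  pose proof (Derive_m_noninc _ _ Hpos Hinv).
  pose proof (Derive_m_pos (m_inv (c' * x)) ltac:(lra)).
  assert (0 < sqrt (x ^ 2 - 1)) by (apply sqrt_lt_R0; nra).
  apply Rinv_le_contravar.
  - repeat apply Rmult_lt_0_compat; lra.
  - repeat apply Rmult_le_compat_r; lra.
Qed.

Lemma Derive_m_lt_after r1 : 0 <= r1 -> Derive (Derive m) r1 < 0 ->
  exists p, r1 < p /\ forall q, p < q -> Derive m q < Derive m p.
Proof.
  intros Hr1 Hneg.
  destruct (continuity_pt_pos_near (fun r => - Derive (Derive m) r) r1) as [del [Hdel Hnear]];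
    [apply continuity_pt_opp, ex_derive_continuity_pt, ex_derive_Derive2_m | lra |].
  exists (r1 + del / 2). split; [lra|]. intros q Hq.
  set (q' := Rmin q (r1 + 3 * del / 4)).
  assert (Hq' : r1 + del / 2 < q' <= q)
    by (split; [apply Rmin_glb_lt | apply Rmin_l]; lra).
  assert (Hq'' : q' <= r1 + 3 * del / 4) by apply Rmin_r.
  destruct (MVT_Derive (Derive m) (r1 + del / 2) q' ex_derive_Derive_m) as [c [Hc E]]; [lra|].
  specialize (Hnear c ltac:(apply Rabs_def1; lra)).
  pose proof (Derive_m_noninc q' q ltac:(lra) ltac:(lra)). nra.
Qed.

Lemma turn_density_lt ru rv : 0 < ru -> ru < rv ->
  (exists r1, ru <= r1 /\ Gm m r1 <> 0) ->
  exists x0, 1 < x0 /\ turn_density (m ru) x0 < turn_density (m rv) x0.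
Proof.
  intros Hru Hruv [r1 [Hr1 HG1]].
  rewrite (Gm_eq_0 r1) in HG1 by lra.
  assert (Hneg : Derive (Derive m) r1 < 0)
    by (pose proof (Derive2_m_nonpos r1 ltac:(lra)); lra).
  destruct (Derive_m_lt_after r1 ltac:(lra) Hneg) as [p [Hp Hdecr]].
  pose proof (m_pos ru Hru). pose proof (m_lt ru rv ltac:(lra) Hruv).
  assert (Hmp : m ru < m p) by (apply m_lt; lra).
  set (x0 := m p / m ru).
  assert (E : m ru * x0 = m p) by (unfold x0; field; lra).
  clearbody x0.
  assert (Hx0 : 1 < x0) by nra.
  exists x0. split; [exact Hx0|]. unfold turn_density.
  rewrite E, m_inv_m by lra.
  assert (Hq : p < m_inv (m rv * x0)).
  { rewrite <- (m_inv_m p) at 1 by lra. apply m_inv_lt; [apply m_nonneg; lra | nra]. }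
  pose proof (Hdecr _ Hq). pose proof (Derive_m_pos (m_inv (m rv * x0)) ltac:(lra)).
  pose proof (Derive_m_pos p ltac:(lra)).
  assert (0 < sqrt (x0 ^ 2 - 1)) by (apply sqrt_lt_R0; nra).
  apply Rinv_lt_contravar.
  - apply Rmult_lt_0_compat; repeat apply Rmult_lt_0_compat; lra.
  - repeat apply Rmult_lt_compat_r; lra.
Qed.

Lemma turn_density_flat ru rv : 0 < ru -> ru <= rv ->
  (forall r, ru <= r -> Gm m r = 0) ->
  forall x, 1 < x -> turn_density (m ru) x = turn_density (m rv) x.
Proof.
  intros Hru Hruv Hflat.
  assert (Hconst : forall r, ru <= r -> Derive m r = Derive m ru).
  { intros r Hr. destruct (Req_dec r ru) as [->|Hne]; [reflexivity|].
    destruct (MVT_Derive (Derive m) ru r ex_derive_Derive_m) as [c [Hc E]]; [lra|].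
    rewrite (proj1 (Gm_eq_0 c ltac:(lra)) (Hflat c ltac:(lra))) in E. lra. }
  assert (Hge : forall y, m ru <= y -> ru <= m_inv y).
  { intros y Hy. rewrite <- (m_inv_m ru) by lra.
    apply m_inv_le; [apply m_nonneg | ]; lra. }
  pose proof (m_pos ru Hru). pose proof (m_le ru rv ltac:(lra) Hruv).
  intros x Hx. unfold turn_density.
  rewrite (Hconst (m_inv (m ru * x))), (Hconst (m_inv (m rv * x))); [reflexivity | |];
    apply Hge; nra.
Qed.

Section UnboundedGeodesic.
Context {r0 th0 : R} {rr th : R -> R}.
Hypothesis geodesic : gamma_of m r0 th0 rr th.

Lemma Derive2_rr_pos s : 0 < Derive (Derive rr) s.
Proof.
  rewrite (Derive2_rr geodesic).
  pose proof (m_rr_pos geodesic s). pose proof (Derive_th_pos geodesic s).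
  pose proof (Derive_m_pos (rr s) (Rlt_le _ _ (rr_pos geodesic s))).
  apply Rmult_lt_0_compat; [apply Rmult_lt_0_compat | apply pow_lt]; assumption.
Qed.

Lemma Derive_rr_lt a b : a < b -> Derive rr a < Derive rr b.
Proof.
  intros Hab. apply Derive_pos_lt; [exact (ex_derive_Derive_rr geodesic) | exact Hab |].
  intros x _. apply Derive2_rr_pos.
Qed.

Lemma rr_lt a b : 0 <= a -> a < b -> rr a < rr b.
Proof.
  intros Ha Hab. apply Derive_pos_lt; [exact (ex_derive_rr geodesic) | exact Hab |].
  intros x Hx. rewrite <- (Derive_rr_0 geodesic). apply Derive_rr_lt. lra.
Qed.

Lemma rr_unbounded : unbounded_nonneg rr.
Proof.
  intros B. set (d := Derive rr 1).
  assert (Hd : 0 < d) by (unfold d; rewrite <- (Derive_rr_0 geodesic); apply Derive_rr_lt; lra).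
  set (S := 2 + Rmax 0 ((B - rr 1) / d)).
  assert (HS : (B - rr 1) / d <= S - 2) by (unfold S; pose proof (Rmax_r 0 ((B - rr 1) / d)); lra).
  assert (HS0 : 0 <= S - 2) by (unfold S; pose proof (Rmax_l 0 ((B - rr 1) / d)); lra).
  exists S. split; [lra|].
  assert (Hlin : rr 1 - d * 1 <= rr S - d * S).
  { apply (Derive_nonneg_le (fun s => rr s - d * s)); [| lra |].
    - intro x. auto_derive. apply (ex_derive_rr geodesic).
    - intros x Hx. rewrite Derive_minus, Derive_scal, Derive_id;
        [| apply (ex_derive_rr geodesic) | auto_derive; auto].
      pose proof (Derive_rr_lt 1 x ltac:(lra)). unfold d. lra. }
  apply (Rmult_le_compat_l d) in HS; [| lra].
  replace (d * ((B - rr 1) / d)) with (B - rr 1) in HS by (field; lra). nra.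
Qed.

Definition ratio (s : R) : R := m (rr s) / m r0.

Lemma ratio_0 : ratio 0 = 1.
Proof.
  unfold ratio. rewrite (rr_0 geodesic). pose proof (m_pos r0 (r0_pos geodesic)). field. lra.
Qed.

Lemma ratio_lt a b : 0 <= a -> a < b -> ratio a < ratio b.
Proof.
  intros Ha Hab. unfold ratio. pose proof (m_pos r0 (r0_pos geodesic)).
  apply Rmult_lt_compat_r; [apply Rinv_0_lt_compat; lra|].
  apply m_lt; [left; apply (rr_pos geodesic) | apply rr_lt; lra].
Qed.

Lemma ratio_le a b : 0 <= a -> a <= b -> ratio a <= ratio b.
Proof.
  intros Ha Hab. destruct (Req_dec a b) as [<-|Hne]; [lra|]. left. apply ratio_lt; lra.
Qed.

Lemma ratio_continuity : continuity ratio.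
Proof.
  intro s. apply ex_derive_continuity_pt. unfold ratio.
  auto_derive. repeat split; [apply ex_derive_m | apply (ex_derive_rr geodesic)].
Qed.

Lemma ratio_attains b : 1 <= b -> exists s, 0 <= s /\ ratio s = b.
Proof.
  intros Hb. pose proof (m_pos r0 (r0_pos geodesic)).
  destruct (m_unbounded (b * m r0)) as [r [Hr Hmr]].
  destruct (rr_unbounded r) as [S [HS HrS]].
  assert (HbS : b <= ratio S).
  { unfold ratio. apply (Rmult_le_reg_r (m r0)); [lra|].
    replace (m (rr S) / m r0 * m r0) with (m (rr S)) by (field; lra).
    pose proof (m_le r (rr S) Hr ltac:(lra)). lra. }
  destruct (IVT_cor (fun s => ratio s - b) 0 S) as [s [Hs Es]]; [| exact HS | |].
  - intro x. apply continuity_pt_minus;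
      [apply ratio_continuity | apply continuity_pt_const; intros ? ?; reflexivity].
  - rewrite ratio_0. nra.
  - exists s. split; lra.
Qed.

Lemma Derive_th_ratio s : 0 < s ->
  Derive th s = Derive m (rr s) * Derive rr s / m r0 * turn_density (m r0) (ratio s).
Proof.
  intros Hs.
  pose proof (m_pos r0 (r0_pos geodesic)). pose proof (m_rr_pos geodesic s).
  pose proof (Derive_m_pos (rr s) (Rlt_le _ _ (rr_pos geodesic s))).
  assert (Hr' : 0 < Derive rr s) by (rewrite <- (Derive_rr_0 geodesic); apply Derive_rr_lt, Hs).
  assert (Hspeed : Derive rr s ^ 2 = 1 - (m r0 / m (rr s)) ^ 2).
  { pose proof (unit_speed geodesic s) as U. rewrite (Derive_th_eq geodesic) in U.
    replace ((m r0 / m (rr s)) ^ 2) with (m (rr s) ^ 2 * (m r0 / m (rr s) ^ 2) ^ 2)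
      by (field; lra). lra. }
  assert (Hsqrt : sqrt (ratio s ^ 2 - 1) = m (rr s) * Derive rr s / m r0).
  { rewrite <- (sqrt_pow2 (m (rr s) * Derive rr s / m r0))
      by (apply Rdiv_le_0_compat; [apply Rmult_le_pos |]; lra).
    f_equal. unfold ratio.
    replace ((m (rr s) * Derive rr s / m r0) ^ 2) with ((m (rr s) / m r0) ^ 2 * Derive rr s ^ 2)
      by (field; lra).
    rewrite Hspeed. field. lra. }
  assert (Hx : m r0 * ratio s = m (rr s)) by (unfold ratio; field; lra).
  unfold turn_density. rewrite Hx, m_inv_m, Hsqrt, (Derive_th_eq geodesic)
    by (left; apply (rr_pos geodesic)).
  unfold ratio. field. lra.
Qed.

Lemma th_sub_RInt s1 s2 : 0 < s1 -> s1 <= s2 ->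
  th s2 - th s1 = RInt (turn_density (m r0)) (ratio s1) (ratio s2).
Proof.
  intros Hs1 Hs12. pose proof (m_pos r0 (r0_pos geodesic)).
  rewrite <- (RInt_comp (turn_density (m r0)) ratio
                (fun s => Derive m (rr s) * Derive rr s / m r0)).
  - rewrite <- RInt_Derive.
    + apply RInt_ext. intros s Hs. rewrite Rmin_left in Hs by lra.
      rewrite (Derive_th_ratio s) by lra. reflexivity.
    + intros s _. apply (ex_derive_th geodesic).
    + intros s _. exact (@ex_derive_continuous R_AbsRing R_NormedModule _ _
                          (ex_derive_Derive_th geodesic s)).
  - intros s Hs. rewrite Rmin_left in Hs by lra.
    apply turn_density_continuous; [lra |].
    rewrite <- ratio_0. apply ratio_lt; lra.
  - intros s _. split.
    + unfold ratio. auto_derive.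
      * split; [apply ex_derive_m | split; [apply (ex_derive_rr geodesic) | exact I]].
      * eta_reduce. field. lra.
    + apply (@ex_derive_continuous R_AbsRing R_NormedModule). auto_derive.
      repeat split; [apply ex_derive_Derive_m | apply (ex_derive_rr geodesic)
                     | apply (ex_derive_Derive_rr geodesic)].
Qed.

Lemma turn_angle_eq : turn_angle th = RInt_1_infty (turn_density (m r0)).
Proof.
  apply Rbar_le_antisym.
  - apply (turn_angle_le geodesic). intros t [Ht|<-].
    + apply (Rbar_le_right_limit (fun s => th t - th s) 0 t); [| exact Ht |].
      * apply ex_derive_continuity_pt. auto_derive. apply (ex_derive_th geodesic).
      * intros s Hs. rewrite th_sub_RInt by lra. apply RInt_le_RInt_1_infty.
        split; [rewrite <- ratio_0; apply ratio_lt | apply ratio_le]; lra.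
    + replace (th 0 - th 0) with (RInt (turn_density (m r0)) 2 2)
        by (rewrite RInt_point; simpl; unfold zero; simpl; ring).
      apply RInt_le_RInt_1_infty. lra.
  - apply Lub_Rbar_correct. intros y [a [b [Hab ->]]].
    destruct (ratio_attains a ltac:(lra)) as [s1 [Hs1 Ea]].
    destruct (ratio_attains b ltac:(lra)) as [s2 [Hs2 Eb]].
    assert (Hs1_pos : 0 < s1).
    { destruct Hs1 as [Hs1|<-]; [exact Hs1|]. rewrite ratio_0 in Ea. lra. }
    assert (Hs12 : s1 <= s2).
    { apply Rnot_lt_le. intros Hlt. pose proof (ratio_lt s2 s1 Hs2 Hlt). lra. }
    rewrite <- Ea, <- Eb, <- th_sub_RInt by assumption.
    apply Rbar_le_trans with (th s2 - th 0); [simpl; pose proof (th_le geodesic 0 s1); lra |].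
    apply (turn_angle_ge geodesic). lra.
Qed.

End UnboundedGeodesic.
End Unbounded.
End Profile.

Theorem proposition4p1 (m : R -> R) (ru thu rv thv : R)
  (ru_t ru_r rv_t rv_r : R -> R) :
  is_profile m ->
  (forall r, 0 < r -> 0 <= Gm m r) ->
  0 < ru -> ru < rv ->
  gamma_of m ru thu ru_r ru_t ->
  gamma_of m rv thv rv_r rv_t ->
  is_finite (turn_angle ru_t) ->
  Rbar_le (turn_angle ru_t) (turn_angle rv_t) /\
  (turn_angle ru_t = turn_angle rv_t <-> (forall r, ru <= r -> Gm m r = 0)).
Proof.
  intros Hm HG Hru Hruv Hu Hv Hfin.
  pose proof (m_unbounded_of_finite_turn_angle m Hm Hu Hfin) as Hunb.
  rewrite (turn_angle_eq m Hm HG Hunb Hu), (turn_angle_eq m Hm HG Hunb Hv) in *.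
  pose proof (m_pos m Hm ru Hru). pose proof (m_lt m Hm HG Hunb ru rv ltac:(lra) Hruv).
  assert (Hcont_u : forall x, 1 < x -> continuous (turn_density m (m ru)) x)
    by (intros; apply (turn_density_continuous m Hm HG Hunb); lra).
  assert (Hcont_v : forall x, 1 < x -> continuous (turn_density m (m rv)) x)
    by (intros; apply (turn_density_continuous m Hm HG Hunb); lra).
  assert (Hle : forall x, 1 < x -> turn_density m (m ru) x <= turn_density m (m rv) x)
    by (intros; apply (turn_density_le m Hm HG Hunb); lra).
  split; [exact (RInt_1_infty_le _ _ Hcont_u Hcont_v Hle) |]. split.
  - intros Heq r Hr. apply NNPP. intros Hne.
    destruct (turn_density_lt m Hm HG Hunb ru rv Hru Hruv) as [x0 [Hx0 Hlt]];
      [exists r; split; assumption |].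
    assert (Hpos : forall x, 1 < x -> 0 <= turn_density m (m ru) x)
      by (intros; left; apply (turn_density_pos m Hm HG Hunb); lra).
    exact (Rbar_lt_not_eq _ _
             (RInt_1_infty_lt _ _ Hcont_u Hcont_v Hle x0 Hpos Hx0 Hlt Hfin) Heq).
  - intros Hflat.
    pose proof (turn_density_flat m Hm HG Hunb ru rv Hru ltac:(lra) Hflat) as Heq.
    apply Rbar_le_antisym; apply RInt_1_infty_le; auto;
      intros x Hx; rewrite (Heq x Hx); lra.
Qed.
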